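(* Let $H$ be a finite, connected, $d$-regular graph on $[n]$, let $i_0$ be a vertex of $H$, and let $j_1,\dots,j_\ell$ ($1\le\ell\le d$) be distinct neighbours of $i_0$. Then: (i) $\Phi_{\ell-1}(x_{i_0};x_{j_1},\dots,x_{j_\ell})\in\mathbb{I}(U(H))$; (ii) $\Phi_{\ell-1}(x_0;x_1,\dots,x_\ell)$ is symmetric in $x_1,\dots,x_\ell$, and its total degree in the variables $x_0,\dots,x_\ell$ is $2d-\ell+1$; (iii) if $\overline{c}\in\mathbb{C}^m$ and $u_0\in\mathbb{C}$ are such that $\Phi_{\overline{c}}(u_0,y)$ has $d$ distinct roots $u_1,\dots,u_d$, then the set of solutions $(x_1,\dots,x_d)\in\mathbb{C}^d$ of the system $\Phi_0(u_0;x_1)=\Phi_1(u_0;x_1,x_2)=\dots=\Phi_{d-1}(u_0;x_1,\dots,x_d)=0$ (coefficients specialized at $\overline{c}$) is exactly the set of all permutations of $(u_1,\dots,u_d)$.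
   Context: Let $\overline{a}=(a_{ij})_{0\le j\le i\le d}$ be $m=(d+1)(d+2)/2$ indeterminates, with $a_{ji}=a_{ij}$, and $\Phi(x,y)=\Phi_{\overline{a}}(x,y)=\sum_{i,j=0}^d a_{ij}x^iy^j$; $\Phi_{\overline{c}}$ denotes its specialization at $\overline{c}\in\mathbb{C}^m$. Define $\Phi_0(x_0;x_1)=\Phi(x_0,x_1)$ and recursively, for $\ell\ge 2$, $\Phi_{\ell-1}(x_0;x_1,\dots,x_\ell)=\dfrac{\Phi_{\ell-2}(x_0;x_1,\dots,x_{\ell-1})-\Phi_{\ell-2}(x_0;x_1,\dots,x_{\ell-2},x_\ell)}{x_\ell-x_{\ell-1}}$ (a polynomial). With $E$ the edge set of $H$: $S(H)=\{\Phi_{\overline{a}}(x_i,x_j):ij\in E\}\subseteq\mathbb{C}[\overline{a},x_1,\dots,x_n]$, $W(H)=\mathbb{V}(S(H))\subseteq\mathbb{C}^{m+n}$, $Z(H)=W(H)\cap\bigcup_{i>j}\mathbb{V}(x_i-x_j)$, $U(H)=\overline{W(H)\setminus Z(H)}$ (Zariski closure), and $\mathbb{I}(U(H))$ is the ideal of polynomials vanishing on $U(H)$. *)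

From HB Require Import structures.
From Stdlib Require Import ClassicalEpsilon.
From mathcomp Require Import all_boot all_order all_algebra all_fingroup.
From mathcomp Require Import Rstruct.
From mathcomp Require Import complex.
From mathcomp Require Import mpoly.



Unset Printing Implicit Defensive.

Import Order.TTheory GRing.Theory Num.Theory.
Local Open Scope ring_scope.

Definition CC : closedFieldType := (Rdefinitions.R)[i].

(* m = (d+1)(d+2)/2 : number of indeterminates a_ij, 0 <= j <= i <= d. *)
Definition nA (d : nat) : nat := ((d.+1 * d.+2) %/ 2)%N.

Lemma nA_gt0 (d : nat) : (0 < nA d)%N.
Proof.
by rewrite /nA divn_gt0 // (leq_trans (_ : 2 <= 1 * 2)%N) // leq_mul.
Qed.

(* Index of the indeterminate a_ij = a_ji in 'I_m:
   for j <= i <= d, a_ij has index i(i+1)/2 + j. *)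
Definition aidx (d i j : nat) : 'I_(nA d) :=
  insubd (Ordinal (nA_gt0 d))
    ((((maxn i j) * (maxn i j).+1) %/ 2) + minn i j)%N.

Definition PhiBiv (R : comNzRingType) (d : nat) (a : nat -> nat -> R)
  (x y : R) : R :=
  \sum_(i < d.+1) \sum_(j < d.+1) a i j * x ^+ i * y ^+ j.

Definition Avar (d n i j : nat) : {mpoly CC[nA d + n]} :=
  'X_(lshift n (aidx d i j)).
Definition Xvar (d n : nat) (k : 'I_n) : {mpoly CC[nA d + n]} :=
  'X_(rshift (nA d) k).

Definition Vset (N : nat) (T : {mpoly CC[N]} -> Prop) : ('I_N -> CC) -> Prop :=
  fun v => forall p, T p -> p.@[v] = 0.

Definition zclosure (N : nat) (S : ('I_N -> CC) -> Prop) : ('I_N -> CC) -> Prop :=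
  fun v => forall T : {mpoly CC[N]} -> Prop,
    (forall w, S w -> Vset N T w) -> Vset N T v.

Definition IdealOf (N : nat) (S : ('I_N -> CC) -> Prop) : {mpoly CC[N]} -> Prop :=
  fun p => forall v, S v -> p.@[v] = 0.

Definition SH (d n : nat) (e : rel 'I_n) : {mpoly CC[nA d + n]} -> Prop :=
  fun p => exists i j : 'I_n, e i j /\ p = PhiBiv _ d (Avar d n) (Xvar d n i) (Xvar d n j).

Definition WH (d n : nat) (e : rel 'I_n) := Vset (nA d + n) (SH d n e).

Definition ZH (d n : nat) (e : rel 'I_n) : ('I_(nA d + n) -> CC) -> Prop :=
  fun v => WH d n e v /\
    exists i j : 'I_n, (j < i)%N /\ (Xvar d n i - Xvar d n j).@[v] = 0.

Definition UH (d n : nat) (e : rel 'I_n) :=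
  zclosure (nA d + n) (fun v => WH d n e v /\ ~ ZH d n e v).

Definition PU (d : nat) := {mpoly CC[nA d + d.+1]}.

Definition UA (d i j : nat) : PU d := 'X_(lshift d.+1 (aidx d i j)).
Definition UX (d t : nat) : PU d := 'X_(rshift (nA d) (inord t : 'I_d.+1)).

Definition subst_var (d s t : nat) : (nA d + d.+1).-tuple (PU d) :=
  [tuple (if i == rshift (nA d) (inord s : 'I_d.+1) then UX d t else 'X_i)
  | i < nA d + d.+1].

(* exact quotient p / q (the r with p = q * r; unique when q != 0) *)
Definition mquot (N : nat) (p q : {mpoly CC[N]}) : {mpoly CC[N]} :=
  epsilon (inhabits 0) (fun r => p = q * r).

(* PhiU d k = Phi_k(x_0; x_1, ..., x_{k+1}):
   Phi_0(x_0; x_1) = Phi(x_0, x_1),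
   Phi_{l-1}(x_0;..,x_l) = (Phi_{l-2}(x_0;..,x_{l-1}) - Phi_{l-2}(x_0;..,x_{l-2},x_l))
                           / (x_l - x_{l-1}). *)
Fixpoint PhiU (d k : nat) : PU d :=
  match k with
  | 0 => PhiBiv _ d (UA d) (UX d 0) (UX d 1)
  | k'.+1 => let P := PhiU d k' in
      mquot (nA d + d.+1) (P - (P \mPo subst_var d k'.+1 k'.+2)) (UX d k'.+2 - UX d k'.+1)
  end.

(* Phi_{l-1}(x_{i0}; x_{j_1}, ..., x_{j_l}) in C[a, x_1..x_n]:
   substitution a -> a, x_0 -> x_{i0}, x_t -> x_{j_t} (1 <= t <= l). *)
Definition spec_tuple (d n l : nat) (i0 : 'I_n) (j : 'I_l -> 'I_n)
  : (nA d + d.+1).-tuple {mpoly CC[nA d + n]} :=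
  [tuple (match split v with
          | inl a => 'X_(lshift n a)
          | inr t => if (t : nat) == 0%N then Xvar d n i0
                     else if insub (t.-1) is Some k then Xvar d n (j k) else 0
          end) | v < nA d + d.+1].

Definition perm_tuple (d l : nat) (s : 'S_l) : (nA d + d.+1).-tuple (PU d) :=
  [tuple (match split v with
          | inl a => 'X_v
          | inr t => if (t : nat) == 0%N then 'X_v
                     else if insub (t.-1) is Some k then UX d (s k).+1 else 'X_v
          end) | v < nA d + d.+1].

(* total degree in the variables x_0, ..., x_d (the a_ij have weight 0) *)
Definition xdeg (d : nat) (p : PU d) : nat :=
  (\max_(mo <- msupp p) \sum_(t < d.+1) mo (rshift (nA d) t))%N.

Definition spec_pt (d : nat) (c : 'I_(nA d) -> CC) (u0 : CC) (x : 'I_d -> CC)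
  : 'I_(nA d + d.+1) -> CC :=
  fun v => match split v with
           | inl a => c a
           | inr t => if (t : nat) == 0%N then u0
                      else if insub (t.-1) is Some k then x k else 0
           end.

Definition PhiSpec (d : nat) (c : 'I_(nA d) -> CC) (u0 : CC) : {poly CC} :=
  PhiBiv _ d (fun i j => (c (aidx d i j))%:P) u0%:P 'X.

From HB Require Import structures.
From mathcomp Require Import all_boot all_order all_algebra all_fingroup.
From mathcomp Require Import Rstruct complex mpoly.
From Stdlib Require Import ClassicalEpsilon.
From mathcomp Require Import ring zify.
Import Order.TTheory GRing.Theory Num.Theory.
Local Open Scope ring_scope.
Set Implicit Arguments. Unset Strict Implicit. Unset Printing Implicit Defensive.

(* Let h_m denote the complete homogeneous symmetric polynomials. Unfolding the
   recursion gives the closed form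
     Phi_k(x_0; x_1, ..., x_(k+1)) = (-1)^k sum_(i,j) a_ij x_0^i h_(j-k)(x_1, ..., x_(k+1)),
   i.e. up to sign Phi_k is the k-th divided difference of y |-> Phi(x_0, y).
   This gives (ii) at once: h is symmetric, and the degree in x is at most
   d + (d - k), attained by the monomial a_dd x_0^d x_1^(d-k).
   A divided difference vanishes at distinct roots. Off the diagonals of W(H)
   the neighbours x_(j_t) of x_(i_0) are distinct roots of Phi(x_(i_0), y),
   which gives (i), the zero set of one polynomial being Zariski closed.
   Conversely, when all the divided differences at x_1, ..., x_d vanish,
   Newton's interpolation formula reads Phi_c(u_0, y) = b prod_t (y - x_t), so
   every root u_k is some x_t and (iii) follows by injectivity of u. *)

Section Points.
Variable T : Type.
Implicit Types (z : nat -> T) (y : T).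

Fixpoint zseq (z : nat -> T) k : seq T :=
  if k is k'.+1 then z k.+1 :: zseq z k' else [:: z 1%N].

Definition zset (z : nat -> T) k y : nat -> T :=
  fun t => if t == k.+1 then y else z t.

Lemma eq_zseq (z z' : nat -> T) k :
  {in [pred t | 0 < t <= k.+1]%N, z =1 z'} -> zseq z k = zseq z' k.
Proof.
elim: k => [|k IH] zz' /=; first by rewrite zz'.
rewrite zz' ?inE ?leqnn // IH // => t /andP[t0 tk].
by rewrite zz' // inE t0 ltnW.
Qed.

Lemma zseq_zset (z : nat -> T) k y : zseq (zset z k y) k = y :: behead (zseq z k).
Proof.
rewrite /zset; case: k => [|k] /=; rewrite ?eqxx //; congr (_ :: _).
by apply: eq_zseq => t /andP[_ tk]; rewrite ltn_eqF.
Qed.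

Lemma zseqE (z : nat -> T) k : zseq z k = z k.+1 :: behead (zseq z k).
Proof. by case: k. Qed.

Lemma zseq_enum z k : zseq z k = rev [seq z i.+1 | i : 'I_k.+1 <- enum 'I_k.+1].
Proof.
rewrite (map_comp (fun t => z t.+1)) val_enum_ord.
elim: k => [|k IH] //.
by rewrite -[k.+2]addn1 iotaD map_cat rev_cat /= -IH.
Qed.

End Points.

Lemma perm_enum_perm (T : finType) (s : {perm T}) : perm_eq [seq s i | i <- enum T] (enum T).
Proof.
apply: uniq_perm; first by rewrite (map_inj_uniq (@perm_inj _ s)) enum_uniq.
  exact: enum_uniq.
by move=> i; rewrite mem_enum; apply/mapP; exists (s^-1 i)%g; rewrite ?mem_enum ?permKV.
Qed.

Lemma perm_zseq (T : eqType) k (s : 'S_k.+1) (z z' : nat -> T) :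
  (forall i : 'I_k.+1, z' i.+1 = z (s i).+1) -> perm_eq (zseq z' k) (zseq z k).
Proof.
move=> z'E; rewrite !zseq_enum perm_rev perm_sym perm_rev perm_sym (eq_map z'E).
rewrite (map_comp (fun i : 'I_k.+1 => z i.+1) s).
exact/perm_map/perm_enum_perm.
Qed.

Section DividedDifferences.
Variable R : comNzRingType.
Implicit Types (z w y : R) (p : nat -> R) (s : seq R).

(* [hstep z p m = \sum_(i <= m) z ^+ i * p (m - i)]: the coefficients of the
   generating series of [p] multiplied by [1 / (1 - z Y)]. *)
Fixpoint hstep z p m : R :=
  if m is m'.+1 then p m + z * hstep z p m' else p 0%N.

(* [hsym s m] is the complete homogeneous symmetric polynomial of degree [m]
   evaluated at the entries of [s]. *)
Fixpoint hsym s : nat -> R :=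
  if s is z :: s' then hstep z (hsym s') else fun m => (m == 0%N)%:R.

(* The [k]-th divided difference of [Y ^+ j] at the points [s] (of size [k.+1]). *)
Definition divdiff_pow s k j : R := if (k <= j)%N then hsym s (j - k) else 0.

Definition divdiffPhi d (a : nat -> nat -> R) x0 (z : nat -> R) k : R :=
  \sum_(i < d.+1) \sum_(j < d.+1) a i j * x0 ^+ i * divdiff_pow (zseq z k) k j.

Lemma hstepS_diff z w p m :
  hstep z p m.+1 - hstep w p m.+1 = (z - w) * hstep w (hstep z p) m.
Proof.
elim: m => [|m IH] /=; first by ring.
have -> : p m.+2 + z * (p m.+1 + z * hstep z p m)
          - (p m.+2 + w * (p m.+1 + w * hstep w p m))
    = (z - w) * (p m.+1 + z * hstep z p m)
      + w * (p m.+1 + z * hstep z p m - (p m.+1 + w * hstep w p m)) by ring.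
by rewrite IH; ring.
Qed.

Lemma eq_hstep z p p' : p =1 p' -> hstep z p =1 hstep z p'.
Proof. by move=> e; elim=> [|m IH] //=; rewrite IH e. Qed.

Lemma hstep0 p : hstep 0 p =1 p.
Proof. by elim=> [|m IH] //=; rewrite mul0r addr0. Qed.

Lemma hsym0 s : hsym s 0 = 1.
Proof. by elim: s. Qed.

Lemma hsym1 y m : hsym [:: y] m = y ^+ m.
Proof. by elim: m => [|m /= ->]; rewrite ?expr0 // add0r exprS. Qed.

Lemma divdiff_pow_diff z w s k j :
  divdiff_pow (z :: s) k j - divdiff_pow (w :: s) k j
    = (z - w) * divdiff_pow [:: w, z & s] k.+1 j.
Proof.
rewrite /divdiff_pow; case: (ltngtP k j) => hkj.
- by rewrite -subnSK //=; apply: hstepS_diff.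
- by rewrite subr0 mulr0.
- by rewrite -hkj subnn /= subrr mulr0.
Qed.

Lemma eq_divdiffPhi d a x0 (z z' : nat -> R) k :
  {in [pred t | 0 < t <= k.+1]%N, z =1 z'} ->
  divdiffPhi d a x0 z k = divdiffPhi d a x0 z' k.
Proof. by move=> zz'; rewrite /divdiffPhi (eq_zseq zz'). Qed.

Lemma eq_divdiffPhi_coef d a a' x0 (z : nat -> R) k :
  a =2 a' -> divdiffPhi d a x0 z k = divdiffPhi d a' x0 z k.
Proof. by move=> aa'; apply: eq_bigr => i _; apply: eq_bigr => j _; rewrite aa'. Qed.

Lemma divdiffPhi_diff d a x0 (z : nat -> R) k :
  divdiffPhi d a x0 z k - divdiffPhi d a x0 (zset z k (z k.+2)) k
    = (z k.+1 - z k.+2) * divdiffPhi d a x0 z k.+1.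
Proof.
rewrite /divdiffPhi -sumrB mulr_sumr; apply: eq_bigr => i _.
rewrite -sumrB mulr_sumr; apply: eq_bigr => j _.
rewrite zseq_zset [zseq z k]zseqE -mulrBr divdiff_pow_diff -zseqE /=; ring.
Qed.

(* The recursion defining [PhiU]. *)
Lemma divdiffPhi_signed_diff d a x0 (z : nat -> R) k :
  (-1) ^+ k * divdiffPhi d a x0 z k - (-1) ^+ k * divdiffPhi d a x0 (zset z k (z k.+2)) k
    = (z k.+2 - z k.+1) * ((-1) ^+ k.+1 * divdiffPhi d a x0 z k.+1).
Proof. by rewrite -mulrBr divdiffPhi_diff exprS; ring. Qed.

Lemma divdiffPhi0 d a x0 (z : nat -> R) :
  divdiffPhi d a x0 z 0 = PhiBiv R d a x0 (z 1%N).
Proof.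
apply: eq_bigr => i _; apply: eq_bigr => j _.
by rewrite /divdiff_pow leq0n subn0 hsym1.
Qed.

Lemma divdiffPhi_top d a x0 (z : nat -> R) :
  divdiffPhi d a x0 z d = \sum_(i < d.+1) a i d * x0 ^+ i.
Proof.
apply: eq_bigr => i _.
rewrite big_ord_recr /= /divdiff_pow leqnn subnn hsym0 mulr1 big1 ?add0r // => j _.
by rewrite leqNgt ltn_ord mulr0.
Qed.

Lemma PhiBiv_newton d a x0 (z : nat -> R) y k :
  (forall t, (t < k)%N -> divdiffPhi d a x0 z t = 0) ->
  PhiBiv R d a x0 y = divdiffPhi d a x0 (zset z k y) k * \prod_(t < k) (y - z t.+1).
Proof.
have -> : PhiBiv R d a x0 y = divdiffPhi d a x0 (zset z 0 y) 0.
  by rewrite divdiffPhi0 /zset eqxx.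
elim: k => [|k IH] z0; first by rewrite big_ord0 mulr1.
rewrite IH; last by move=> t tk; rewrite z0 // ltnS ltnW.
suff -> : divdiffPhi d a x0 (zset z k y) k
          = (y - z k.+1) * divdiffPhi d a x0 (zset z k.+1 y) k.+1.
  by rewrite big_ord_recr /=; ring.
have := divdiffPhi_diff d a x0 (zset z k.+1 y) k.
rewrite (@eq_divdiffPhi d a x0 _ z); last first.
  by move=> t /andP[_ tk]; rewrite /zset ltn_eqF // ltnS.
rewrite z0 // (@eq_divdiffPhi d a x0 _ (zset z k y)); last first.
  by move=> t /andP[_ tk]; rewrite /zset eqxx (@ltn_eqF t k.+2).
rewrite add0r /zset eqxx ltn_eqF // => E; rewrite -[LHS]opprK E; ring.
Qed.

End DividedDifferences.

Section Morphism.
Variables (R S : comNzRingType) (f : {rmorphism R -> S}).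

Lemma rmorph_hstep z p m : f (hstep z p m) = hstep (f z) (f \o p) m.
Proof. by elim: m => [|m IH] //=; rewrite rmorphD rmorphM IH. Qed.

Lemma rmorph_hsym s m : f (hsym s m) = hsym (map f s) m.
Proof.
elim: s m => [|z s IH] m /=; first by rewrite rmorph_nat.
by rewrite rmorph_hstep; apply: eq_hstep => t /=; rewrite IH.
Qed.

Lemma map_zseq z k : map f (zseq z k) = zseq (f \o z) k.
Proof. by elim: k => [|k IH] //=; rewrite IH. Qed.

Lemma rmorph_divdiffPhi d a x0 z k :
  f (divdiffPhi d a x0 z k) = divdiffPhi d (fun i j => f (a i j)) (f x0) (f \o z) k.
Proof.
rewrite rmorph_sum; apply: eq_bigr => i _; rewrite rmorph_sum; apply: eq_bigr => j _.
rewrite !rmorphM rmorphXn /divdiff_pow; case: ifP => _; last by rewrite rmorph0.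
by rewrite rmorph_hsym map_zseq.
Qed.

Lemma rmorph_PhiBiv d a x y :
  f (PhiBiv R d a x y) = PhiBiv S d (fun i j => f (a i j)) (f x) (f y).
Proof.
rewrite rmorph_sum; apply: eq_bigr => i _; rewrite rmorph_sum.
by apply: eq_bigr => j _; rewrite !rmorphM !rmorphXn.
Qed.

End Morphism.

Section IntegralDomain.
Variable R : idomainType.
Implicit Types (z w : R) (s : seq R).

Lemma hstepC z w p m : hstep w (hstep z p) m = hstep z (hstep w p) m.
Proof.
have [-> //|nzw] := eqVneq z w.
apply: (mulfI (x := z - w)); first by rewrite subr_eq0.
rewrite -hstepS_diff -[z - w]opprB mulNr -hstepS_diff; ring.
Qed.

Lemma hsym_perm s s' : perm_eq s s' -> hsym s =1 hsym s'.
Proof.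
have hsym_mid s1 z s2 : hsym (s1 ++ z :: s2) =1 hsym (z :: s1 ++ s2).
  elim: s1 => [|w s1 IH] m //=.
  by rewrite (eq_hstep w IH) /= hstepC.
elim: s s' => [|z s IH] s' ss' m.
  by move: (perm_size ss'); case: s' ss'.
have zs' : z \in s' by rewrite -(perm_mem ss') mem_head.
move: ss'; case/splitPr: zs' => s1 s2 ss'.
rewrite hsym_mid /=; apply: eq_hstep => {}m; apply: IH.
rewrite -(perm_cons z); apply: (perm_trans ss').
by rewrite -[z :: s2]cat1s perm_catCA.
Qed.

Lemma divdiffPhi_perm d a x0 (z z' : nat -> R) k :
  perm_eq (zseq z k) (zseq z' k) -> divdiffPhi d a x0 z k = divdiffPhi d a x0 z' k.
Proof.
move=> zz'; apply: eq_bigr => i _; apply: eq_bigr => j _.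
by rewrite /divdiff_pow; case: ifP => // _; rewrite (hsym_perm zz').
Qed.

Lemma divdiffPhi_roots d a x0 (z : nat -> R) k :
  {in [pred t | 0 < t <= k.+1]%N, forall t, PhiBiv R d a x0 (z t) = 0} ->
  {in [pred t | 0 < t <= k.+1]%N &, injective z} ->
  divdiffPhi d a x0 z k = 0.
Proof.
elim: k z => [|k IH] z zroot zinj; first by rewrite divdiffPhi0 zroot ?inE.
have widen t : t \in [pred t | 0 < t <= k.+1]%N -> t \in [pred t | 0 < t <= k.+2]%N.
  by rewrite !inE => /andP[-> /leqW].
pose r t := if t == k.+1 then k.+2 else t.
have r_in t : t \in [pred t | 0 < t <= k.+1]%N -> r t \in [pred t | 0 < t <= k.+2]%N.
  by rewrite /r !inE; case: eqP => [->|_] // /andP[-> /leqW].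
have zsetE t : zset z k (z k.+2) t = z (r t) by rewrite /zset /r; case: eqP.
have := divdiffPhi_diff d a x0 z k.
rewrite [divdiffPhi _ _ _ z k]IH; first last.
- by move=> t t' /widen tk /widen t'k /zinj; apply.
- by move=> t tk; rewrite zroot ?widen.
rewrite IH; first last.
- move=> t t' tk t'k; rewrite !zsetE => /(zinj _ _ (r_in _ tk) (r_in _ t'k)).
  by move: tk t'k; rewrite /r !inE; do 2 case: eqP => ? //; lia.
- by move=> t tk; rewrite zsetE zroot ?r_in.
rewrite subrr => /esym/eqP; rewrite mulf_eq0 subr_eq0 => /orP[/eqP e|/eqP //].
suff : k.+1 = k.+2 by lia.
by apply: (zinj _ _ _ _ e); rewrite inE //= leqW.
Qed.

End IntegralDomain.

Lemma mquot_eq N (p q r : {mpoly CC[N]}) : q != 0 -> p = q * r -> mquot N p q = r.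
Proof.
move=> qnz pE; apply: (mulfI qnz); rewrite -pE.
exact/esym/(epsilon_spec (inhabits 0) (fun r => p = q * r) (ex_intro _ r pE)).
Qed.

Lemma val_inord n t : nat_of_ord (inord t : 'I_n.+1) = if (t <= n)%N then t else 0%N.
Proof.
case: ifP => tn; first by rewrite inordK.
by rewrite /inord /insubd insubN // ltnS tn.
Qed.

Lemma split_lshift m n (i : 'I_m) : split (lshift n i) = inl i.
Proof. exact: (unsplitK (inl i)). Qed.

Lemma split_rshift m n (i : 'I_n) : split (rshift m i) = inr i.
Proof. exact: (unsplitK (inr i)). Qed.

Lemma comp_mpoly_signM (R : comNzRingType) n k (lq : n.-tuple {mpoly R[k]}) e p :
  ((-1) ^+ e * p) \mPo lq = (-1) ^+ e * (p \mPo lq).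
Proof. by rewrite rmorphM rmorph_sign. Qed.

Section UniversalPhi.
Variable d : nat.
Local Notation N := (nA d + d.+1)%N.

Lemma UX_sub_neq0 s t : (s <= d)%N -> (t <= d)%N -> s != t -> UX d s - UX d t != 0.
Proof.
move=> sd td st; apply/eqP.
move=> /(congr1 (meval (fun i => (i == rshift (nA d) (inord s : 'I_d.+1))%:R))).
rewrite mevalB !mevalXU eqxx eq_rshift.
have /negbTE -> : (inord t : 'I_d.+1) != inord s.
  by apply: contra st => /eqP/(congr1 val); rewrite /= !inordK // => ->.
by rewrite subr0 meval0 => /eqP; rewrite oner_eq0.
Qed.

Lemma UA_subst k i j : UA d i j \mPo subst_var d k.+1 k.+2 = UA d i j.
Proof. by rewrite comp_mpolyXU -tnth_nth tnth_mktuple eq_lrshift. Qed.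

Lemma UX_subst k t : (k.+2 <= d)%N ->
  UX d t \mPo subst_var d k.+1 k.+2 = zset (UX d) k (UX d k.+2) t.
Proof.
move=> kd; rewrite /UX comp_mpolyXU -tnth_nth tnth_mktuple eq_rshift /zset.
case: (t =P k.+1) => [->|tk]; first by rewrite eqxx.
by case: eqP => // /(congr1 val); rewrite /= !val_inord; do 2 case: ifP; lia.
Qed.

Lemma comp_divdiffPhi (lq : N.-tuple (PU d)) a x0 z k :
  divdiffPhi d a x0 z k \mPo lq
    = divdiffPhi d (fun i j => a i j \mPo lq) (x0 \mPo lq) (fun t => z t \mPo lq) k.
Proof. exact: (rmorph_divdiffPhi (comp_mpoly lq)). Qed.

Lemma PhiU_succ k : PhiU d k.+1 =
  mquot N (PhiU d k - (PhiU d k \mPo subst_var d k.+1 k.+2)) (UX d k.+2 - UX d k.+1).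
Proof. by []. Qed.

Lemma PhiU_divdiffPhi k : (k < d)%N ->
  PhiU d k = (-1) ^+ k * divdiffPhi d (UA d) (UX d 0) (UX d) k.
Proof.
elim: k => [|k IH] kd; first by rewrite expr0 mul1r divdiffPhi0.
rewrite PhiU_succ; apply: mquot_eq.
  by apply: UX_sub_neq0 => //; [apply: ltnW | elim: k {IH kd}].
rewrite (IH (ltnW kd)) comp_mpoly_signM comp_divdiffPhi.
rewrite (eq_divdiffPhi_coef d _ _ _ (UA_subst k)) [UX d 0 \mPo _]UX_subst //.
rewrite (@eq_divdiffPhi _ d _ _ (fun t => UX d t \mPo subst_var d k.+1 k.+2)
   (zset (UX d) k (UX d k.+2)) k) => [|t _].
  exact: divdiffPhi_signed_diff.
exact: UX_subst.
Qed.

End UniversalPhi.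

(* [idx1 x] is [x : 'I_m -> V] read as the 1-indexed sequence [x_1, ..., x_m],
   the indexing of the variables [x_1, x_2, ...] of [PhiU]. *)
Definition idx1 (V : zmodType) m (x : 'I_m -> V) (t : nat) : V :=
  if insub t.-1 is Some k then x k else 0.

Lemma idx1E (V : zmodType) m (x : 'I_m -> V) (k : 'I_m) : idx1 x k.+1 = x k.
Proof. by rewrite /idx1 /= valK. Qed.

Lemma idx1_ord m k t : (k < m)%N -> (0 < t <= k.+1)%N -> exists i : 'I_m, t = i.+1.
Proof.
move=> km /andP[t0 tk]; have tm : (t.-1 < m)%N by lia.
by exists (Ordinal tm) => /=; lia.
Qed.

Lemma meval_PhiU d k (v : 'I_(nA d + d.+1) -> CC) : (k < d)%N ->
  (PhiU d k).@[v] = (-1) ^+ k * divdiffPhi d (fun i j => v (lshift _ (aidx d i j)))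
     (v (rshift _ (inord 0))) (fun t => v (rshift _ (inord t))) k.
Proof.
move=> kd; rewrite PhiU_divdiffPhi // mevalM rmorph_sign rmorph_divdiffPhi.
rewrite (eq_divdiffPhi_coef d _ _ _ (fun i j => mevalXU v _)) /= mevalXU.
by congr (_ * _); apply: eq_divdiffPhi => t _; rewrite /= mevalXU.
Qed.

Section NewtonRoots.
Variables (d : nat) (c : 'I_(nA d) -> CC) (u0 : CC).
Local Notation coefs := (fun i j => c (aidx d i j)).

Lemma meval_PhiU_spec_pt k x : (k < d)%N ->
  (PhiU d k).@[spec_pt d c u0 x] = (-1) ^+ k * divdiffPhi d coefs u0 (idx1 x) k.
Proof.
move=> kd; rewrite meval_PhiU //; congr (_ * _).
rewrite /spec_pt split_rshift val_inord leq0n eqxx.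
rewrite (@eq_divdiffPhi_coef _ d _ coefs) => [|i j]; last first.
  by rewrite split_lshift.
apply: eq_divdiffPhi => t /andP[t0 tk]; rewrite split_rshift val_inord.
have -> : (t <= d)%N by lia.
by case: t t0 {tk}.
Qed.

Lemma horner_PhiSpec y : (PhiSpec d c u0).[y] = PhiBiv CC d coefs u0 y.
Proof.
rewrite horner_sum; apply: eq_bigr => i _.
by rewrite horner_sum; apply: eq_bigr => j _; rewrite !hornerE.
Qed.

Lemma PhiSpec_factor x :
  (forall k, (k < d)%N -> divdiffPhi d coefs u0 (idx1 x) k = 0) ->
  exists b, PhiSpec d c u0 = b%:P * \prod_(t < d) ('X - (x t)%:P).
Proof.
move=> dd0; exists (divdiffPhi d coefs u0 (idx1 x) d).
pose zP t := (idx1 x t)%:P.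
rewrite /PhiSpec (PhiBiv_newton (z := zP) _ _ (k := d)) => [|t td].
  rewrite !divdiffPhi_top rmorph_sum; congr (_ * _).
    by apply: eq_bigr => i _; rewrite rmorphM rmorphXn.
  by apply: eq_bigr => t _; rewrite /zP idx1E.
by rewrite -[zP]/(polyC \o idx1 x) -rmorph_divdiffPhi dd0 ?rmorph0.
Qed.

Lemma spec_pt_roots (u : 'I_d -> CC) :
  PhiSpec d c u0 != 0 -> injective u -> (forall k, root (PhiSpec d c u0) (u k)) ->
  forall x : 'I_d -> CC,
    (forall k : 'I_d, (PhiU d k).@[spec_pt d c u0 x] = 0) <->
    (exists s : 'S_d, forall k, x k = u (s k)).
Proof.
move=> nz uinj uroot x; split; last first.
  move=> [s xu] k; rewrite meval_PhiU_spec_pt //.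
  suff -> : divdiffPhi d coefs u0 (idx1 x) k = 0 by rewrite mulr0.
  have /idx1_ord z_in := ltn_ord k.
  apply: divdiffPhi_roots => [t /z_in[i ->]|t t' /z_in[i ->] /z_in[i' ->]].
    by rewrite idx1E xu -horner_PhiSpec; apply/eqP/uroot.
  by rewrite !idx1E !xu => /uinj/perm_inj ->.
move=> PhiU0.
have [b PhiE] : exists b, PhiSpec d c u0 = b%:P * \prod_(t < d) ('X - (x t)%:P).
  apply: PhiSpec_factor => k kd; have := PhiU0 (Ordinal kd).
  by rewrite meval_PhiU_spec_pt // => /eqP; rewrite mulf_eq0 signr_eq0 => /eqP.
have u_in i : exists t : 'I_d, u i = x t.
  move: (uroot i); rewrite /root PhiE hornerM hornerC horner_prod mulf_eq0.
  case/orP => [/eqP b0|]; first by move: nz; rewrite PhiE b0 rmorph0 mul0r eqxx.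
  by case/prodf_eq0 => t _; rewrite hornerXsubC subr_eq0 => /eqP ->; exists t.
pose g i := odflt i [pick t | u i == x t].
have gE i : u i = x (g i).
  rewrite /g; case: pickP => [t /eqP //|none].
  by have [t uE] := u_in i; move: (none t); rewrite uE eqxx.
have ginj : injective g by move=> i i' e; apply: uinj; rewrite !gE e.
exists (perm ginj)^-1%g => k.
by rewrite gE -[g _](permE ginj) permKV.
Qed.

End NewtonRoots.

Lemma meval_PhiBiv N d (w : 'I_N -> CC) a (x y : {mpoly CC[N]}) :
  (PhiBiv _ d a x y).@[w] = PhiBiv CC d (fun i j => (a i j).@[w]) x.@[w] y.@[w].
Proof. exact: (rmorph_PhiBiv (meval w)). Qed.

Section GraphIdeal.
Variables (d n : nat) (e : rel 'I_n) (i0 : 'I_n) (l : nat) (j : 'I_l -> 'I_n).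
Hypotheses (l_gt0 : (0 < l)%N) (l_le_d : (l <= d)%N).

Lemma meval_PhiU_spec_tuple w :
  (PhiU d l.-1 \mPo spec_tuple d n l i0 j).@[w]
    = (-1) ^+ l.-1 * divdiffPhi d (fun a b => w (lshift n (aidx d a b)))
        (w (rshift (nA d) i0)) (idx1 (fun k => w (rshift (nA d) (j k)))) l.-1.
Proof.
rewrite comp_mpoly_meval meval_PhiU; last lia.
congr (_ * _); rewrite tnth_mktuple split_rshift val_inord leq0n eqxx mevalXU.
rewrite (@eq_divdiffPhi_coef _ d _ (fun a b => w (lshift n (aidx d a b)))) => [|a b].
  apply: eq_divdiffPhi => t /andP[t0 tl]; rewrite tnth_mktuple split_rshift val_inord.
  have -> : (t <= d)%N by lia.
  have -> : (t == 0%N) = false by lia.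
  by rewrite /idx1; case: insubP => [k _ _|_]; rewrite ?mevalXU ?meval0.
by rewrite tnth_mktuple split_lshift mevalXU.
Qed.

(* Off the diagonals, the neighbours [x_(j k)] of [x_i0] are distinct roots of
   [Phi(x_i0, Y)]. *)
Lemma PhiU_spec_tuple_eq0 w :
  injective j -> (forall k, e i0 (j k)) -> WH d n e w -> ~ ZH d n e w ->
  (PhiU d l.-1 \mPo spec_tuple d n l i0 j).@[w] = 0.
Proof.
move=> jinj adj Ww notZw; rewrite meval_PhiU_spec_tuple.
apply/eqP; rewrite mulf_eq0; apply/orP; right; apply/eqP.
have /idx1_ord z_in : (l.-1 < l)%N by lia.
apply: divdiffPhi_roots => [t /z_in[k ->]|t t' /z_in[k ->] /z_in[k' ->]].
  rewrite idx1E.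
  have := Ww _ (ex_intro _ i0 (ex_intro _ (j k) (conj (adj k) erefl))).
  rewrite meval_PhiBiv /Xvar !mevalXU => <-.
  by apply: eq_bigr => a _; apply: eq_bigr => b _; rewrite mevalXU.
rewrite !idx1E => wjj'; congr _.+1; congr nat_of_ord; apply: jinj.
apply/eqP/negPn/negP => jj'; apply: notZw; split => //.
have diag u v :
    w (rshift (nA d) u) = w (rshift (nA d) v) -> (Xvar d n u - Xvar d n v).@[w] = 0.
  by move=> wuv; rewrite mevalB /Xvar !mevalXU wuv subrr.
case: (ltngtP (j k) (j k')) => jk.
- by exists (j k'), (j k); split => //; apply: diag.
- by exists (j k), (j k'); split => //; apply: diag.
- by move: jj'; rewrite (val_inj jk) eqxx.
Qed.

End GraphIdeal.

Lemma PhiU_spec_tuple_in_ideal d n (e : rel 'I_n) (i0 : 'I_n) l (j : 'I_l -> 'I_n) :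
  (1 <= l)%N -> (l <= d)%N -> injective j -> (forall k, e i0 (j k)) ->
  IdealOf (nA d + n) (UH d n e) (PhiU d l.-1 \mPo spec_tuple d n l i0 j).
Proof.
move=> l_gt0 l_le_d jinj adj v Uv.
apply: (Uv (fun q => q = PhiU d l.-1 \mPo spec_tuple d n l i0 j)) => // w [Ww notZw] _ ->.
exact: PhiU_spec_tuple_eq0.
Qed.

Lemma PhiU_perm_tuple d l (s : 'S_l) : (1 <= l)%N -> (l <= d)%N ->
  PhiU d l.-1 \mPo perm_tuple d l s = PhiU d l.-1.
Proof.
case: l s => // k s _ kd.
change (PhiU d k \mPo perm_tuple d k.+1 s = PhiU d k).
rewrite (PhiU_divdiffPhi kd) comp_mpoly_signM comp_divdiffPhi; apply: congr1.
rewrite (@eq_divdiffPhi_coef _ d _ (UA d)) => [|i j]; last first.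
  by rewrite comp_mpolyXU -tnth_nth tnth_mktuple split_lshift.
rewrite [UX d 0 \mPo _]comp_mpolyXU -tnth_nth tnth_mktuple split_rshift val_inord leq0n eqxx.
apply: divdiffPhi_perm; apply: (@perm_zseq _ k s (UX d)) => i.
rewrite /UX comp_mpolyXU -tnth_nth tnth_mktuple split_rshift val_inord.
have -> : (i.+1 <= d)%N by have := ltn_ord i; lia.
by rewrite /= valK.
Qed.

Section XDegree.
Variable d : nat.
Local Notation N := (nA d + d.+1)%N.

Definition xweight (m : 'X_{1..N}) : nat := (\sum_(t < d.+1) m (rshift (nA d) t))%N.

Definition xdeg_le (D : nat) (p : PU d) : Prop :=
  forall m, m \in msupp p -> (xweight m <= D)%N.

Lemma xweightD m1 m2 : xweight (m1 + m2)%MM = (xweight m1 + xweight m2)%N.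
Proof. by rewrite /xweight -big_split; apply: eq_bigr => t _; rewrite mnmDE. Qed.

Lemma xdeg_leW D D' p : (D <= D')%N -> xdeg_le D p -> xdeg_le D' p.
Proof. by move=> DD' Dp m /Dp /leq_trans; apply. Qed.

Lemma xdeg_le0 D : xdeg_le D 0.
Proof. by move=> m; rewrite msupp0. Qed.

Lemma xdeg_le1 D : xdeg_le D 1.
Proof.
move=> m; rewrite msupp1 inE => /eqP ->.
by rewrite /xweight big1 // => t _; rewrite mnm0E.
Qed.

Lemma xdeg_leD D p q : xdeg_le D p -> xdeg_le D q -> xdeg_le D (p + q).
Proof. by move=> Dp Dq m /msuppD_le; rewrite mem_cat => /orP[/Dp|/Dq]. Qed.

Lemma xdeg_leN D p : xdeg_le D p -> xdeg_le D (- p).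
Proof. by move=> Dp m; rewrite (perm_mem (msuppN p)); apply: Dp. Qed.

Lemma xdeg_leM D1 D2 p q : xdeg_le D1 p -> xdeg_le D2 q -> xdeg_le (D1 + D2) (p * q).
Proof.
move=> Dp Dq m /msuppM_le /allpairsP [[m1 m2] /= [m1p m2q ->]].
by rewrite xweightD leq_add ?Dp ?Dq.
Qed.

Lemma xdeg_le_sum (I : Type) (r : seq I) (F : I -> PU d) D :
  (forall i, xdeg_le D (F i)) -> xdeg_le D (\sum_(i <- r) F i).
Proof.
move=> DF; elim: r => [|i r IH]; first by rewrite big_nil; apply: xdeg_le0.
by rewrite big_cons; apply: xdeg_leD.
Qed.

Lemma xdeg_leX D p e : xdeg_le D p -> xdeg_le (D * e) (p ^+ e).
Proof.
move=> Dp; elim: e => [|e IH]; first by rewrite expr0; apply: xdeg_le1.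
by rewrite exprS mulnS; apply: xdeg_leM.
Qed.

Lemma xdeg_le_UA i j : xdeg_le 0 (UA d i j).
Proof.
move=> m; rewrite msuppX inE => /eqP ->.
by rewrite /xweight big1 // => t _; rewrite mnm1E eq_lrshift.
Qed.

Lemma xdeg_le_UX t : xdeg_le 1 (UX d t).
Proof.
move=> m; rewrite msuppX inE => /eqP ->.
rewrite /xweight (bigD1 (inord t)) //= mnm1E eqxx big1 // => t' t't.
by rewrite mnm1E eq_rshift eq_sym (negbTE t't).
Qed.

Lemma xdeg_le_hstep z p m :
  xdeg_le 1 z -> (forall m', xdeg_le m' (p m')) -> xdeg_le m (hstep z p m).
Proof.
move=> Dz Dp; elim: m => [|m IH] /=; first exact: Dp.
by apply: xdeg_leD; [apply: Dp | apply: (xdeg_leM Dz IH)].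
Qed.

Lemma xdeg_le_hsym s m : (forall z, z \in s -> xdeg_le 1 z) -> xdeg_le m (hsym s m).
Proof.
elim: s m => [|z s IH] m Ds /=.
  by case: (m == 0%N); [apply: xdeg_leW (xdeg_le1 0) | apply: xdeg_le0].
apply: xdeg_le_hstep => [|m']; first by apply: Ds; rewrite mem_head.
by apply: IH => z' z's; apply: Ds; rewrite inE z's orbT.
Qed.

Lemma xdeg_le_zseq_UX k z : z \in zseq (UX d) k -> xdeg_le 1 z.
Proof.
elim: k => [|k IH] /=; first by rewrite inE => /eqP ->; apply: xdeg_le_UX.
by rewrite inE => /orP[/eqP ->|/IH //]; apply: xdeg_le_UX.
Qed.

Lemma xdeg_le_PhiU k : (k < d)%N -> xdeg_le (2 * d - k) (PhiU d k).
Proof.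
move=> kd; rewrite PhiU_divdiffPhi // -[(2 * d - k)%N]add0n.
apply: xdeg_leM; first by rewrite -(mul0n k); apply/xdeg_leX/xdeg_leN/xdeg_le1.
apply: xdeg_le_sum => i; apply: xdeg_le_sum => j.
apply: (@xdeg_leW ((0 + 1 * i) + (j - k))%N).
  by have := ltn_ord i; have := ltn_ord j; lia.
apply: xdeg_leM; first by apply: xdeg_leM; [apply: xdeg_le_UA | apply/xdeg_leX/xdeg_le_UX].
rewrite /divdiff_pow; case: ifP => _; last exact: xdeg_le0.
by apply: xdeg_le_hsym => z; apply: xdeg_le_zseq_UX.
Qed.

End XDegree.

Lemma size_prod_exp (R : nzRingType) (I : Type) (r : seq I) (F : I -> {poly R})
    (e : I -> nat) :
  (size (\prod_(i <- r) F i ^+ e i)%R <= (\sum_(i <- r) (size (F i)).-1 * e i).+1)%N.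
Proof.
elim: r => [|i r IH]; first by rewrite !big_nil size_poly1.
rewrite !big_cons; apply: leq_trans (size_polyMleq _ _) _.
have := size_poly_exp_leq (F i) (e i); lia.
Qed.

Definition triangle (M : nat) : nat := (M * M.+1 %/ 2)%N.

Lemma triangleS M : triangle M.+1 = (triangle M + M.+1)%N.
Proof.
rewrite /triangle (_ : M.+1 * M.+2 = M.+1 * 2 + M * M.+1)%N; last by ring.
by rewrite divnDl ?dvdn_mull // mulnK // addnC.
Qed.

Lemma triangle_lt M M' : (M < M')%N -> (triangle M + M < triangle M')%N.
Proof.
elim: M' => // M' IH; rewrite ltnS leq_eqVlt => /orP[/eqP ->|/IH].
  by rewrite triangleS; lia.
by rewrite triangleS; lia.
Qed.

Lemma aidxE d i j : (i <= d)%N -> (j <= d)%N ->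
  nat_of_ord (aidx d i j) = (triangle (maxn i j) + minn i j)%N.
Proof.
move=> id jd; rewrite /aidx val_insubd -/(triangle (maxn i j)).
suff -> : (triangle (maxn i j) + minn i j < nA d)%N by [].
rewrite /nA -/(triangle d.+1).
apply: leq_ltn_trans (triangle_lt (_ : maxn i j < d.+1)%N); last by rewrite ltnS geq_max id.
by rewrite leq_add2l geq_min leq_maxr orbT.
Qed.

Lemma aidx_eq_top d i j : (i <= d)%N -> (j <= d)%N ->
  (aidx d i j == aidx d d d) = (i == d) && (j == d).
Proof.
move=> id jd; apply/eqP/andP => [/(congr1 val)|[/eqP -> /eqP ->] //].
rewrite /= !aidxE // maxnn minnn => E.
have maxd : maxn i j = d.
  apply/eqP; rewrite eqn_leq geq_max id jd leqNgt; apply/negP => /triangle_lt; lia.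
by rewrite maxd in E; split; apply/eqP; lia.
Qed.

Section Collapse.
Variable d : nat.
Local Notation N := (nA d + d.+1)%N.

(* The substitution [a_dd := 1], [a_ij := 0] otherwise, [x_0 = x_1 := X],
   [x_t := 0] otherwise: it maps [PhiU d k] to [(-1) ^+ k * X ^+ (2 * d - k)]
   and cannot increase the degree in [x]. *)
Definition collapse_var (v : 'I_N) : {poly CC} :=
  match split v with
  | inl a => (a == aidx d d d)%:R%:P
  | inr t => if (t <= 1)%N then 'X else 0
  end.

Definition collapse (p : PU d) : {poly CC} := mmap (@polyC CC) collapse_var p.

Lemma size_mmap1_collapse_var m : (size (mmap1 collapse_var m) <= (xweight m).+1)%N.
Proof.
apply: leq_trans (size_prod_exp _ _ _) _; rewrite ltnS.
rewrite -[X in (X <= _)%N]/(\sum_(i < N) (size (collapse_var i)).-1 * m i)%N.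
rewrite big_split_ord /= big1 ?add0n => [|i _]; last first.
  by rewrite /collapse_var split_lshift size_polyC; case: (_ != 0).
apply: leq_sum => t _; rewrite /collapse_var split_rshift.
by case: ifP => _; rewrite ?size_polyX ?size_poly0 /= ?mul1n ?mul0n.
Qed.

Lemma coef_collapse p D :
  (forall m, m \in msupp p -> (xweight m < D)%N) -> (collapse p)`_D = 0.
Proof.
move=> pD; rewrite /collapse /mmap coef_sum big_seq big1 // => m mp.
by rewrite coefCM nth_default ?mulr0 // (leq_trans (size_mmap1_collapse_var m)) ?pD.
Qed.

Lemma collapse_divdiffPhi a x0 z k :
  collapse (divdiffPhi d a x0 z k)
    = divdiffPhi d (fun i j => collapse (a i j)) (collapse x0) (collapse \o z) k.
Proof. exact: (rmorph_divdiffPhi (mmap (@polyC CC) collapse_var)). Qed.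

Lemma collapse_signM e p : collapse ((-1) ^+ e * p) = (-1) ^+ e * collapse p.
Proof. by rewrite /collapse rmorphM rmorph_sign. Qed.

Lemma collapseX i : collapse 'X_i = collapse_var i.
Proof. by rewrite /collapse mmapX mmap1U. Qed.

Lemma hsym_zseq_X1 k m :
  hsym (zseq (fun t => if t == 1%N then 'X else 0) k) m = 'X ^+ m :> {poly CC}.
Proof. by elim: k m => [|k IH] m; [exact: hsym1 | rewrite /= hstep0]. Qed.

Lemma collapse_PhiU k : (k < d)%N -> collapse (PhiU d k) = (-1) ^+ k * 'X ^+ (2 * d - k).
Proof.
move=> kd; rewrite PhiU_divdiffPhi // collapse_signM collapse_divdiffPhi; apply: congr1.
pose zX t : {poly CC} := if t == 1%N then 'X else 0.
rewrite (@eq_divdiffPhi _ d _ _ _ zX) => [|t tk]; last first.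
  rewrite inE in tk; rewrite /= /UX collapseX /collapse_var split_rshift val_inord.
  have -> : (t <= d)%N by lia.
  by rewrite /zX; case: (t =P 1%N) => [->|t1] //; have -> : (t <= 1)%N = false by lia.
rewrite /UX collapseX /collapse_var split_rshift val_inord leq0n /=.
rewrite /divdiffPhi (bigD1 ord_max) //= [X in _ + X]big1 => [|i i_max]; last first.
  have /negbTE i_d : (i : nat) != d by [].
  apply: big1 => j _; rewrite /UA collapseX /collapse_var split_lshift.
  by rewrite aidx_eq_top ?leq_ord // i_d mulr0n !mul0r.
rewrite addr0 (bigD1 ord_max) //= [X in _ + X]big1 => [|j j_max]; last first.
  have /negbTE j_d : (j : nat) != d by [].
  rewrite /UA collapseX /collapse_var split_lshift.
  by rewrite aidx_eq_top ?leq_ord // eqxx j_d mulr0n !mul0r.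
rewrite addr0 /UA collapseX /collapse_var split_lshift eqxx mul1r /divdiff_pow ltnW //.
by rewrite /zX hsym_zseq_X1 -exprD; congr (_ ^+ _); lia.
Qed.

Lemma xdeg_PhiU l : (1 <= l)%N -> (l <= d)%N -> xdeg d (PhiU d l.-1) = (2 * d - l + 1)%N.
Proof.
move=> l_gt0 l_le_d; have kd : (l.-1 < d)%N by lia.
have -> : (2 * d - l + 1 = 2 * d - l.-1)%N by lia.
apply/eqP; rewrite eqn_leq; apply/andP; split.
  by apply/bigmax_leqP_seq => m mp _; apply: xdeg_le_PhiU.
rewrite leqNgt; apply/negP => xdeg_lt.
have : (collapse (PhiU d l.-1))`_(2 * d - l.-1) = 0.
  apply: coef_collapse => m mp; apply: leq_ltn_trans xdeg_lt.
  exact: (@leq_bigmax_seq _ _ xpredT _ m mp).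
rewrite collapse_PhiU // -[(-1) ^+ _](rmorph_sign (@polyC CC)) coefCM coefXn eqxx mulr1.
by move/eqP; rewrite signr_eq0.
Qed.

End Collapse.

Unset Implicit Arguments.

Theorem mainTheorem10 (d : nat) :
  (* (i) *)
  (forall (n : nat) (e : rel 'I_n),
     (forall u v : 'I_n, e u v = e v u) -> irreflexive e ->
     (forall u v : 'I_n, connect e u v) ->
     (forall u : 'I_n, #|[set v | e u v]| = d) ->
     forall (i0 : 'I_n) (l : nat) (j : 'I_l -> 'I_n),
       (1 <= l)%N -> (l <= d)%N -> injective j -> (forall k, e i0 (j k)) ->
       IdealOf (nA d + n) (UH d n e) (PhiU d l.-1 \mPo spec_tuple d n l i0 j))
  /\
  (* (ii) *)
  (forall l : nat, (1 <= l)%N -> (l <= d)%N ->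
     (forall s : 'S_l, PhiU d l.-1 \mPo perm_tuple d l s = PhiU d l.-1) /\
     xdeg d (PhiU d l.-1) = (2 * d - l + 1)%N)
  /\
  (* (iii) *)
  (forall (c : 'I_(nA d) -> CC) (u0 : CC) (u : 'I_d -> CC),
     PhiSpec d c u0 != 0 -> injective u -> (forall k, root (PhiSpec d c u0) (u k)) ->
     forall x : 'I_d -> CC,
       (forall k : 'I_d, (PhiU d k).@[spec_pt d c u0 x] = 0) <->
       (exists s : 'S_d, forall k, x k = u (s k))).
Proof.
split; last split.
- (* only adjacency of the [j k] to [i0] is used, not regularity or connectedness *)
  move=> n e _ _ _ _ i0 l j; exact: PhiU_spec_tuple_in_ideal.
- by move=> l l_gt0 l_le_d; split; [move=> s; apply: PhiU_perm_tuple | apply: xdeg_PhiU].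
- exact: spec_pt_roots.
Qed.
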